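(* Let $w\in\mathbb{D}\setminus\{0\}$ and $B(z)=z^2\frac{w-z}{1-\bar wz}$. Let $k_w(z)=(1-\bar wz)^{-1}$, so that $\{e_1,e_2,e_3\}=\{1,z,\frac{z^2}{\|k_w\|}k_w\}$ is an orthonormal basis of the three-dimensional space $K^2_B$. For a linear operator $A$ on $K^2_B$ let $b_{i,j}=\langle Ae_j,e_i\rangle$. Then $A\in\mathcal{T}(B)$ if and only if $b_{2,2}=b_{1,1}$, $b_{2,3}=\bar wb_{1,3}+\|k_w\|^{-1}b_{1,2}$, $b_{3,2}=\|k_w\|^{-1}b_{2,1}+wb_{3,1}$, and $b_{3,3}=b_{1,1}+\bar w^2\|k_w\|b_{1,3}+\bar wb_{1,2}+wb_{2,1}+w^2\|k_w\|b_{3,1}$.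
   Context: $K^2_\theta=H^2\ominus\theta H^2$ for inner $\theta$, $P_\theta$ the orthogonal projection of $L^2(\mathbb{T})$ onto $K^2_\theta$. For $\varphi\in L^2$, $A^\theta_\varphi f=P_\theta(\varphi f)$ for $f\in K^2_\theta$ with $\varphi f\in L^2$; $\mathcal{T}(\theta)$ is the set of bounded such operators. $\|k_w\|=(1-|w|^2)^{-1/2}$ is the $H^2$-norm of $k_w$. *)

(* Complex numbers are modelled as pairs of reals;
   L^2(T) is modelled by Fourier coefficient sequences Z -> Cx (Plancherel),
   H^2 functions by Taylor = nonnegative Fourier coefficient sequences nat -> Cx. *)
From Stdlib Require Import Reals ZArith Arith.
Open Scope R_scope.

Record Cx := mkC { re : R ; im : R }.

Definition RtoC (r : R) : Cx := mkC r 0.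
Definition C0 : Cx := RtoC 0.
Definition C1 : Cx := RtoC 1.
Definition Cadd (x y : Cx) : Cx := mkC (re x + re y) (im x + im y).
Definition Cmul (x y : Cx) : Cx :=
  mkC (re x * re y - im x * im y) (re x * im y + im x * re y).
Definition Cconj (x : Cx) : Cx := mkC (re x) (- im x).
Definition Cnorm2 (x : Cx) : R := re x * re x + im x * im x.
Fixpoint Cpow (x : Cx) (n : nat) : Cx :=
  match n with O => C1 | S k => Cmul x (Cpow x k) end.

Definition Cser_cv (a : nat -> Cx) (l : Cx) : Prop :=
  Un_cv (fun N => sum_f_R0 (fun k => re (a k)) N) (re l) /\
  Un_cv (fun N => sum_f_R0 (fun k => im (a k)) N) (im l).

Definition L2 (phi : Z -> Cx) : Prop :=
  exists M : R, forall N : nat,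
    sum_f_R0 (fun n => Cnorm2 (phi (Z.of_nat n)) + Cnorm2 (phi (- Z.of_nat n - 1)%Z)) N <= M.

Definition knorm (w : Cx) : R := / sqrt (1 - Cnorm2 w).

(* Taylor coefficients of the orthonormal basis e_1 = 1, e_2 = z,
   e_3 = z^2 k_w / ||k_w||, where k_w(z) = sum_n conj(w)^n z^n. *)
Definition ebasis (w : Cx) (j : nat) (n : nat) : Cx :=
  match j with
  | 1%nat => if Nat.eqb n 0 then C1 else C0
  | 2%nat => if Nat.eqb n 1 then C1 else C0
  | 3%nat => if Nat.ltb n 2 then C0
             else Cmul (RtoC (/ knorm w)) (Cpow (Cconj w) (n - 2))
  | _ => C0
  end.

Definition prod_coef (phi : Z -> Cx) (f : nat -> Cx) (n : nat) (c : Cx) : Prop :=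
  Cser_cv (fun m => Cmul (phi (Z.of_nat n - Z.of_nat m)%Z) (f m)) c.

(* v = < A^B_phi e_j , e_i > = < P_B (phi e_j), e_i > = < phi e_j, e_i >_{L^2}
   (e_i lies in K^2_B, P_B self-adjoint; e_i has no negative coefficients). *)
Definition tto_entry (w : Cx) (phi : Z -> Cx) (i j : nat) (v : Cx) : Prop :=
  exists g : nat -> Cx,
    (forall n, prod_coef phi (ebasis w j) n (g n)) /\
    Cser_cv (fun n => Cmul (g n) (Cconj (ebasis w i n))) v.

Definition in_TTO (w : Cx) (b : nat -> nat -> Cx) : Prop :=
  exists phi : Z -> Cx, L2 phi /\
    forall i j : nat, (1 <= i <= 3)%nat -> (1 <= j <= 3)%nat ->
      tto_entry w phi i j (b i j).

(* Since e_1 = 1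
   and e_2 = z, the upper-left 2x2 block only sees phi(-1), phi(0), phi(1) and is Toeplitz.
   The coefficients of e_3 obey e_3(n+1) = conj(w) e_3(n) + ||k_w||^-1 [n = 1], so the
   coefficients of phi e_3 obey the same recursion with forcing term ||k_w||^-1 phi(n-1).
   Shifting the series defining b_23, b_32 and b_33 by one index with these recursions
   expresses them through the other entries; for b_33 this gives a fixpoint equation with
   factor |w|^2 < 1, solved using 1 - |w|^2 = ||k_w||^-2.  Conversely, for a matrix
   satisfying the relations, the trigonometric polynomial with coefficients
   ||k_w|| b_13, b_12, b_11, b_21, ||k_w|| b_31 at -2, ..., 2 is a symbol: all its entries
   exist (the series have geometric tails of ratio |w|^2), five of them equal the free
   entries by direct computation, and the relations force the remaining four. *)

From Pilot Require Import Defs.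
From Stdlib Require Import Reals Lra Lia Psatz.
Open Scope R_scope.

Lemma Cx_ext x y : re x = re y -> im x = im y -> x = y.
Proof. destruct x, y; simpl; intros -> ->; reflexivity. Qed.

Ltac Cx_ring := apply Cx_ext; simpl; ring.

Lemma Cnorm2_nonneg x : 0 <= Cnorm2 x.
Proof. unfold Cnorm2; nra. Qed.

Lemma Cx_affine_fixpoint s x y :
  s <> 1 -> x = Cadd (Cmul (RtoC s) x) y -> x = Cmul (RtoC (/ (1 - s))) y.
Proof.
  intros Hs E.
  assert (Hs' : 1 - s <> 0) by lra.
  pose proof (f_equal re E) as Er; pose proof (f_equal im E) as Ei; simpl in Er, Ei.
  apply Cx_ext; simpl; apply (Rmult_eq_reg_l (1 - s)); auto;
    field_simplify; auto; lra.
Qed.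

Lemma Un_cv_const c : Un_cv (fun _ => c) c.
Proof. intros eps Heps; exists 0%nat; intros n _; rewrite Rdist_eq; exact Heps. Qed.

Lemma Rser_cv_plus f g lf lg :
  Un_cv (fun N => sum_f_R0 f N) lf -> Un_cv (fun N => sum_f_R0 g N) lg ->
  Un_cv (fun N => sum_f_R0 (fun k => f k + g k) N) (lf + lg).
Proof.
  intros Hf Hg; apply (Un_cv_ext (fun N => sum_f_R0 f N + sum_f_R0 g N)).
  - intro N; symmetry; apply plus_sum.
  - now apply CV_plus.
Qed.

Lemma Rser_cv_scal x f l :
  Un_cv (fun N => sum_f_R0 f N) l ->
  Un_cv (fun N => sum_f_R0 (fun k => x * f k) N) (x * l).
Proof.
  intro Hf; apply (Un_cv_ext (fun N => x * sum_f_R0 f N)).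
  - intro N; rewrite scal_sum; apply sum_eq; intros; ring.
  - apply CV_mult; [apply Un_cv_const | exact Hf].
Qed.

Lemma Rser_cv_shift f l :
  Un_cv (fun N => sum_f_R0 (fun k => f (S k)) N) l ->
  Un_cv (fun N => sum_f_R0 f N) (f 0%nat + l).
Proof.
  intro H; apply (CV_shift _ 1).
  apply (Un_cv_ext (fun N => f 0%nat + sum_f_R0 (fun k => f (S k)) N)).
  - intro N; rewrite Nat.add_1_r, (decomp_sum f (S N)) by lia; reflexivity.
  - apply CV_plus; [apply Un_cv_const | exact H].
Qed.

Lemma Rser_cv_finite f N :
  (forall n, (N < n)%nat -> f n = 0) ->
  Un_cv (fun M => sum_f_R0 f M) (sum_f_R0 f N).
Proof.
  intro Hf; apply (CV_shift _ N).
  apply (Un_cv_ext (fun _ => sum_f_R0 f N)); [|apply Un_cv_const].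
  intro n; induction n as [|n IH]; [reflexivity|].
  rewrite Nat.add_succ_l, tech5, <- IH, Hf by lia; ring.
Qed.

Definition Cpsum (a : nat -> Cx) (N : nat) : Cx :=
  mkC (sum_f_R0 (fun k => re (a k)) N) (sum_f_R0 (fun k => im (a k)) N).

Lemma Cser_cv_unique a l l' : Cser_cv a l -> Cser_cv a l' -> l = l'.
Proof. intros [Hr Hi] [Hr' Hi']; apply Cx_ext; eapply UL_sequence; eauto. Qed.

Lemma Cser_cv_ext a a' l : (forall n, a n = a' n) -> Cser_cv a l -> Cser_cv a' l.
Proof.
  intros E [Hr Hi]; split; eapply Un_cv_ext; try eassumption;
    intro N; apply sum_eq; intros; now rewrite E.
Qed.

Lemma Cser_cv_add a b la lb :
  Cser_cv a la -> Cser_cv b lb -> Cser_cv (fun n => Cadd (a n) (b n)) (Cadd la lb).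
Proof. intros [Har Hai] [Hbr Hbi]; split; simpl; now apply Rser_cv_plus. Qed.

Lemma Cser_cv_scal k a l :
  Cser_cv a l -> Cser_cv (fun n => Cmul k (a n)) (Cmul k l).
Proof.
  intros [Hr Hi]; split; simpl.
  - replace (re k * re l - im k * im l) with (re k * re l + - im k * im l) by ring.
    eapply Un_cv_ext;
      [|exact (Rser_cv_plus _ _ _ _ (Rser_cv_scal (re k) _ _ Hr) (Rser_cv_scal (- im k) _ _ Hi))].
    intro N; apply sum_eq; intros; simpl; ring.
  - eapply Un_cv_ext;
      [|exact (Rser_cv_plus _ _ _ _ (Rser_cv_scal (re k) _ _ Hi) (Rser_cv_scal (im k) _ _ Hr))].
    intro N; apply sum_eq; intros; simpl; ring.
Qed.

Lemma Cser_cv_shift a l :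
  Cser_cv (fun n => a (S n)) l -> Cser_cv a (Cadd (a 0%nat) l).
Proof. intros [Hr Hi]; split; simpl; now apply Rser_cv_shift. Qed.

Lemma Cser_cv_finite a N :
  (forall n, (N < n)%nat -> a n = C0) -> Cser_cv a (Cpsum a N).
Proof.
  intro Ha; split; simpl; apply Rser_cv_finite; intros n Hn; now rewrite Ha.
Qed.

Lemma Cser_cv_geometric r :
  Rabs r < 1 -> Cser_cv (fun n => RtoC (r ^ n)) (RtoC (/ (1 - r))).
Proof.
  intro Hr; split; simpl.
  - apply (Un_cv_ext (fun N => sum_f_R0 (fun n => 1 * r ^ n) N)).
    + intro N; apply sum_eq; intros; ring.
    + exact (GP_infinite r Hr).
  - exact (Rser_cv_finite (fun _ => 0) 0 (fun _ _ => eq_refl)).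
Qed.

Lemma Cser_ex_shift a N :
  (exists l, Cser_cv (fun n => a (n + N)%nat) l) -> exists l, Cser_cv a l.
Proof.
  revert a; induction N as [|N IH]; intros a [l Hl].
  - exists l; exact (Cser_cv_ext _ _ _ (fun n => f_equal a (Nat.add_0_r n)) Hl).
  - destruct (IH (fun n => a (S n))) as [l' Hl'].
    + exists l; exact (Cser_cv_ext _ _ _ (fun n => f_equal a (Nat.add_succ_r n N)) Hl).
    + exists (Cadd (a 0%nat) l'); now apply Cser_cv_shift.
Qed.

Lemma Cser_ex_geometric_tail a r N :
  Rabs r < 1 -> (forall n, (N <= n)%nat -> a (S n) = Cmul (RtoC r) (a n)) ->
  exists l, Cser_cv a l.
Proof.
  intros Hr Ha; apply (Cser_ex_shift a N).
  assert (Htail : forall n, a (n + N)%nat = Cmul (a N) (RtoC (r ^ n))).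
  { induction n as [|n IH]; simpl; [Cx_ring|].
    rewrite Ha, IH by lia; Cx_ring. }
  exists (Cmul (a N) (RtoC (/ (1 - r)))).
  apply (Cser_cv_ext (fun n => Cmul (a N) (RtoC (r ^ n)))).
  - intro n; symmetry; apply Htail.
  - now apply Cser_cv_scal, Cser_cv_geometric.
Qed.

Definition Cdelta (k n : nat) : Cx := if Nat.eqb n k then Defs.C1 else C0.

Lemma Cser_cv_delta a k : Cser_cv (fun n => Cmul (a n) (Cdelta k n)) (a k).
Proof.
  revert a; induction k as [|k IH]; intro a.
  - replace (a 0%nat) with (Cpsum (fun n => Cmul (a n) (Cdelta 0 n)) 0) by Cx_ring.
    apply Cser_cv_finite; intros [|n] Hn; [lia | Cx_ring].
  - replace (a (S k)) with (Cadd (Cmul (a 0%nat) (Cdelta (S k) 0)) (a (S k))) by Cx_ring.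
    exact (Cser_cv_shift (fun n => Cmul (a n) (Cdelta (S k) n)) _ (IH (fun n => a (S n)))).
Qed.

Lemma Cser_cv_recurrence (u e : nat -> Cx) q d k L L' :
  e 0%nat = C0 ->
  (forall m, e (S m) = Cadd (Cmul q (e m)) (Cmul d (Cdelta k m))) ->
  Cser_cv (fun m => Cmul (u (S m)) (e m)) L ->
  Cser_cv (fun m => Cmul (u m) (e m)) L' ->
  L' = Cadd (Cmul q L) (Cmul d (u (S k))).
Proof.
  intros He0 He HL HL'.
  apply (Cser_cv_unique _ _ _ HL').
  replace (Cadd (Cmul q L) (Cmul d (u (S k))))
    with (Cadd (Cmul (u 0%nat) (e 0%nat)) (Cadd (Cmul q L) (Cmul d (u (S k)))))
    by (rewrite He0; Cx_ring).
  apply (Cser_cv_shift (fun m => Cmul (u m) (e m))).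
  apply (Cser_cv_ext (fun m => Cadd (Cmul q (Cmul (u (S m)) (e m)))
                                   (Cmul (Cmul d (u (S m))) (Cdelta k m)))).
  - intro m; rewrite He; Cx_ring.
  - apply Cser_cv_add; [now apply Cser_cv_scal | apply (Cser_cv_delta (fun m => Cmul d (u (S m))))].
Qed.

Lemma knorm_neq0 w : Cnorm2 w < 1 -> knorm w <> 0.
Proof.
  intro hw; unfold knorm; apply Rinv_neq_0_compat.
  enough (0 < sqrt (1 - Cnorm2 w)) by lra.
  apply sqrt_lt_R0; lra.
Qed.

Lemma knorm_inv_sqr w : Cnorm2 w < 1 -> / knorm w * / knorm w = 1 - Cnorm2 w.
Proof. intro hw; unfold knorm; rewrite Rinv_inv; apply sqrt_sqrt; lra. Qed.

Lemma ebasis_delta w k : (k <= 1)%nat -> ebasis w (S k) = Cdelta k.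
Proof. destruct k as [|[|k]]; [reflexivity | reflexivity | lia]. Qed.

Lemma ebasis_3_succ w m :
  ebasis w 3 (S m) =
  Cadd (Cmul (Cconj w) (ebasis w 3 m)) (Cmul (RtoC (/ knorm w)) (Cdelta 1 m)).
Proof.
  destruct m as [|[|m]]; simpl; try Cx_ring.
  rewrite Nat.sub_0_r; Cx_ring.
Qed.

Lemma conj_ebasis_3_succ w m :
  Cconj (ebasis w 3 (S m)) =
  Cadd (Cmul w (Cconj (ebasis w 3 m))) (Cmul (RtoC (/ knorm w)) (Cdelta 1 m)).
Proof. rewrite ebasis_3_succ; unfold Cdelta; destruct (Nat.eqb m 1); Cx_ring. Qed.

Lemma conj_ebasis_3_0 w : Cconj (ebasis w 3 0) = C0.
Proof. Cx_ring. Qed.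

Lemma ebasis_succ_geometric w j n :
  (2 <= n)%nat -> ebasis w j (S n) = Cmul (Cconj w) (ebasis w j n).
Proof.
  intro Hn; destruct n as [|[|n]]; [lia | lia |].
  destruct j as [|[|[|[|j]]]]; simpl; try Cx_ring.
  rewrite Nat.sub_0_r; Cx_ring.
Qed.

Lemma conj_ebasis_succ_geometric w j n :
  (2 <= n)%nat -> Cconj (ebasis w j (S n)) = Cmul w (Cconj (ebasis w j n)).
Proof. intro Hn; rewrite ebasis_succ_geometric by exact Hn; Cx_ring. Qed.

Definition mul_ebasis_coefs w (phi : Z -> Cx) j (g : nat -> Cx) : Prop :=
  forall n, prod_coef phi (ebasis w j) n (g n).

Lemma prod_coef_unique phi f n c c' :
  prod_coef phi f n c -> prod_coef phi f n c' -> c = c'.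
Proof. apply Cser_cv_unique. Qed.

Lemma prod_coef_delta phi k n :
  prod_coef phi (Cdelta k) n (phi (Z.of_nat n - Z.of_nat k)%Z).
Proof. exact (Cser_cv_delta (fun m => phi (Z.of_nat n - Z.of_nat m)%Z) k). Qed.

Lemma mul_ebasis_coefs_delta w phi k g :
  (k <= 1)%nat -> mul_ebasis_coefs w phi (S k) g ->
  forall n, g n = phi (Z.of_nat n - Z.of_nat k)%Z.
Proof.
  intros Hk Hg n; apply (prod_coef_unique phi (Cdelta k) n).
  - rewrite <- (ebasis_delta w k Hk); apply Hg.
  - apply prod_coef_delta.
Qed.

Lemma mul_ebasis_coefs_3_succ w phi G :
  mul_ebasis_coefs w phi 3 G ->
  forall n, G (S n) = Cadd (Cmul (Cconj w) (G n))
                           (Cmul (RtoC (/ knorm w)) (phi (Z.of_nat n - 1)%Z)).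
Proof.
  intros HG n.
  rewrite (Cser_cv_recurrence (fun m => phi (Z.of_nat (S n) - Z.of_nat m)%Z) (ebasis w 3)
             (Cconj w) (RtoC (/ knorm w)) 1 (G n) (G (S n)) eq_refl (ebasis_3_succ w)).
  - now replace (Z.of_nat (S n) - Z.of_nat 2)%Z with (Z.of_nat n - 1)%Z by lia.
  - eapply Cser_cv_ext; [|apply (HG n)]; intro m; cbv beta.
    now replace (Z.of_nat (S n) - Z.of_nat (S m))%Z with (Z.of_nat n - Z.of_nat m)%Z by lia.
  - apply HG.
Qed.

Lemma tto_entry_row_delta w phi k j v :
  (k <= 1)%nat -> tto_entry w phi (S k) j v ->
  exists g, mul_ebasis_coefs w phi j g /\ v = g k.
Proof.
  intros Hk [g [Hg Hv]]; exists g; split; [exact Hg|].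
  rewrite (ebasis_delta w k Hk) in Hv; apply (Cser_cv_unique _ _ _ Hv).
  apply (Cser_cv_ext (fun n => Cmul (g n) (Cdelta k n))); [|apply Cser_cv_delta].
  intro n; unfold Cdelta; destruct (Nat.eqb n k); Cx_ring.
Qed.

Lemma tto_entry_toeplitz_block w phi k l v :
  (k <= 1)%nat -> (l <= 1)%nat -> tto_entry w phi (S k) (S l) v ->
  v = phi (Z.of_nat k - Z.of_nat l)%Z.
Proof.
  intros Hk Hl H; destruct (tto_entry_row_delta w phi k _ v Hk H) as [g [Hg ->]].
  exact (mul_ebasis_coefs_delta w phi l g Hl Hg k).
Qed.

Lemma tto_entry_column_delta w phi l v :
  (l <= 1)%nat -> tto_entry w phi 3 (S l) v ->
  Cser_cv (fun n => Cmul (phi (Z.of_nat n - Z.of_nat l)%Z) (Cconj (ebasis w 3 n))) v.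
Proof.
  intros Hl [g [Hg Hv]]; eapply Cser_cv_ext; [|exact Hv]; intro n; cbv beta.
  now rewrite (mul_ebasis_coefs_delta w phi l g Hl Hg n).
Qed.

Lemma tto_entry_23 w phi v23 v13 v12 :
  tto_entry w phi 2 3 v23 -> tto_entry w phi 1 3 v13 -> tto_entry w phi 1 2 v12 ->
  v23 = Cadd (Cmul (Cconj w) v13) (Cmul (RtoC (/ knorm w)) v12).
Proof.
  intros H23 H13 H12.
  rewrite (tto_entry_toeplitz_block w phi 0 1 v12 ltac:(lia) ltac:(lia) H12).
  destruct (tto_entry_row_delta w phi 1 3 v23 ltac:(lia) H23) as [G [HG ->]].
  destruct (tto_entry_row_delta w phi 0 3 v13 ltac:(lia) H13) as [G' [HG' ->]].
  rewrite (mul_ebasis_coefs_3_succ w phi G HG 0).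
  now rewrite (prod_coef_unique _ _ _ _ _ (HG 0%nat) (HG' 0%nat)).
Qed.

Lemma tto_entry_32 w phi v32 v21 v31 :
  tto_entry w phi 3 2 v32 -> tto_entry w phi 2 1 v21 -> tto_entry w phi 3 1 v31 ->
  v32 = Cadd (Cmul (RtoC (/ knorm w)) v21) (Cmul w v31).
Proof.
  intros H32 H21 H31.
  rewrite (tto_entry_toeplitz_block w phi 1 0 v21 ltac:(lia) ltac:(lia) H21).
  rewrite (Cser_cv_recurrence (fun m => phi (Z.of_nat m - 1)%Z) (fun n => Cconj (ebasis w 3 n))
             w (RtoC (/ knorm w)) 1 v31 v32 (conj_ebasis_3_0 w) (conj_ebasis_3_succ w)).
  - simpl; Cx_ring.
  - eapply Cser_cv_ext; [|exact (tto_entry_column_delta w phi 0 v31 ltac:(lia) H31)].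
    intro m; cbv beta; now replace (Z.of_nat (S m) - 1)%Z with (Z.of_nat m - Z.of_nat 0)%Z by lia.
  - exact (tto_entry_column_delta w phi 1 v32 ltac:(lia) H32).
Qed.

Lemma tto_entry_33 w phi v33 v32 v13 v12 v11 v21 v31 :
  Cnorm2 w < 1 ->
  tto_entry w phi 3 3 v33 -> tto_entry w phi 3 2 v32 -> tto_entry w phi 1 3 v13 ->
  tto_entry w phi 1 2 v12 -> tto_entry w phi 1 1 v11 -> tto_entry w phi 2 1 v21 ->
  tto_entry w phi 3 1 v31 ->
  v33 = Cadd v11
          (Cadd (Cmul (Cmul (Cpow (Cconj w) 2) (RtoC (knorm w))) v13)
            (Cadd (Cmul (Cconj w) v12)
              (Cadd (Cmul w v21) (Cmul (Cmul (Cpow w 2) (RtoC (knorm w))) v31)))).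
Proof.
  intros hw [G [HG H33]] H32 H13 H12 H11 H21 H31.
  assert (Hshift : Cser_cv (fun m => Cmul (G (S m)) (Cconj (ebasis w 3 m)))
                           (Cadd (Cmul (Cconj w) v33) (Cmul (RtoC (/ knorm w)) v32))).
  { eapply Cser_cv_ext;
      [|exact (Cser_cv_add _ _ _ _ (Cser_cv_scal (Cconj w) _ _ H33)
                 (Cser_cv_scal (RtoC (/ knorm w)) _ _ (tto_entry_column_delta w phi 1 v32 ltac:(lia) H32)))].
    intro m; cbv beta; rewrite (mul_ebasis_coefs_3_succ w phi G HG m).
    change (Z.of_nat 1) with 1%Z; Cx_ring. }
  pose proof (Cser_cv_recurrence G (fun n => Cconj (ebasis w 3 n)) w (RtoC (/ knorm w)) 1 _ _
                (conj_ebasis_3_0 w) (conj_ebasis_3_succ w) Hshift H33) as E.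
  assert (Hv33 : v33 = Cmul (RtoC (/ (1 - Cnorm2 w)))
                            (Cmul (RtoC (/ knorm w)) (Cadd (Cmul w v32) (G 2%nat)))).
  { apply Cx_affine_fixpoint; [lra|]. rewrite E at 1; unfold Cnorm2; Cx_ring. }
  rewrite Hv33, <- (knorm_inv_sqr w hw),
    (tto_entry_32 w phi v32 v21 v31 H32 H21 H31),
    (mul_ebasis_coefs_3_succ w phi G HG 1), (mul_ebasis_coefs_3_succ w phi G HG 0).
  destruct (tto_entry_row_delta w phi 0 3 v13 ltac:(lia) H13) as [G' [HG' ->]].
  rewrite (prod_coef_unique _ _ _ _ _ (HG 0%nat) (HG' 0%nat)),
    (tto_entry_toeplitz_block w phi 0 1 v12 ltac:(lia) ltac:(lia) H12),
    (tto_entry_toeplitz_block w phi 0 0 v11 ltac:(lia) ltac:(lia) H11).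
  pose proof (knorm_neq0 w hw); apply Cx_ext; simpl; field; assumption.
Qed.

Definition tto_conditions (w : Cx) (b : nat -> nat -> Cx) : Prop :=
  b 2%nat 2%nat = b 1%nat 1%nat /\
  b 2%nat 3%nat = Cadd (Cmul (Cconj w) (b 1%nat 3%nat))
                       (Cmul (RtoC (/ knorm w)) (b 1%nat 2%nat)) /\
  b 3%nat 2%nat = Cadd (Cmul (RtoC (/ knorm w)) (b 2%nat 1%nat))
                       (Cmul w (b 3%nat 1%nat)) /\
  b 3%nat 3%nat =
    Cadd (b 1%nat 1%nat)
     (Cadd (Cmul (Cmul (Cpow (Cconj w) 2) (RtoC (knorm w))) (b 1%nat 3%nat))
      (Cadd (Cmul (Cconj w) (b 1%nat 2%nat))
       (Cadd (Cmul w (b 2%nat 1%nat))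
             (Cmul (Cmul (Cpow w 2) (RtoC (knorm w))) (b 3%nat 1%nat))))).

Lemma in_TTO_conditions w b : Cnorm2 w < 1 -> in_TTO w b -> tto_conditions w b.
Proof.
  intros hw [phi [_ Hb]]; split; [|split; [|split]].
  - pose proof (Hb 1%nat 1%nat ltac:(lia) ltac:(lia)) as H11.
    pose proof (Hb 2%nat 2%nat ltac:(lia) ltac:(lia)) as H22.
    rewrite (tto_entry_toeplitz_block w phi 1 1 _ ltac:(lia) ltac:(lia) H22),
      (tto_entry_toeplitz_block w phi 0 0 _ ltac:(lia) ltac:(lia) H11).
    reflexivity.
  - apply tto_entry_23 with phi; apply Hb; lia.
  - apply tto_entry_32 with phi; apply Hb; lia.
  - apply (tto_entry_33 w phi _ (b 3%nat 2%nat)); [exact hw | ..]; apply Hb; lia.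
Qed.

Definition finitely_supported (phi : Z -> Cx) (N : nat) : Prop :=
  forall z, (Z.of_nat N < Z.abs z)%Z -> phi z = C0.

Lemma L2_finitely_supported phi N : finitely_supported phi N -> L2 phi.
Proof.
  intro Hphi; eexists; intro M; apply sum_incr.
  - apply Rser_cv_finite with (N := N); intros n Hn.
    rewrite !Hphi by lia; unfold Cnorm2; simpl; ring.
  - intro n; pose proof (Cnorm2_nonneg (phi (Z.of_nat n)));
      pose proof (Cnorm2_nonneg (phi (- Z.of_nat n - 1)%Z)); lra.
Qed.

Lemma prod_coef_finitely_supported phi N f n :
  finitely_supported phi N ->
  prod_coef phi f n (Cpsum (fun m => Cmul (phi (Z.of_nat n - Z.of_nat m)%Z) (f m)) (n + N)).
Proof. intro Hphi; apply Cser_cv_finite; intros m Hm; rewrite Hphi by lia; Cx_ring. Qed.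

Lemma mul_ebasis_coefs_geometric_tail w phi N j g :
  finitely_supported phi N -> (1 <= j <= 3)%nat -> mul_ebasis_coefs w phi j g ->
  forall n, (N + 2 <= n)%nat -> g (S n) = Cmul (Cconj w) (g n).
Proof.
  intros Hphi Hj Hg n Hn; destruct (Nat.eq_dec j 3) as [->|Hj3].
  - rewrite (mul_ebasis_coefs_3_succ w phi g Hg n), (Hphi (Z.of_nat n - 1)%Z) by lia; Cx_ring.
  - replace j with (S (j - 1)) in Hg by lia.
    rewrite !(mul_ebasis_coefs_delta w phi (j - 1) g ltac:(lia) Hg), !Hphi by lia; Cx_ring.
Qed.

Lemma tto_entry_exists_finitely_supported w phi N i j :
  Cnorm2 w < 1 -> finitely_supported phi N -> (1 <= j <= 3)%nat ->
  exists v, tto_entry w phi i j v.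
Proof.
  intros hw Hphi Hj.
  set (g n := Cpsum (fun m => Cmul (phi (Z.of_nat n - Z.of_nat m)%Z) (ebasis w j m)) (n + N)).
  assert (Hg : mul_ebasis_coefs w phi j g)
    by (intro n; exact (prod_coef_finitely_supported phi N _ n Hphi)).
  destruct (Cser_ex_geometric_tail (fun n => Cmul (g n) (Cconj (ebasis w i n))) (Cnorm2 w) (N + 2))
    as [v Hv].
  - rewrite Rabs_right; [exact hw | apply Rle_ge, Cnorm2_nonneg].
  - intros n Hn; cbv beta.
    rewrite (mul_ebasis_coefs_geometric_tail w phi N j g Hphi Hj Hg n Hn),
      conj_ebasis_succ_geometric by lia.
    unfold Cnorm2; Cx_ring.
  - exists v, g; split; assumption.
Qed.

Definition tto_symbol (w : Cx) (b : nat -> nat -> Cx) (z : Z) : Cx :=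
  if Z.eqb z 0 then b 1%nat 1%nat else
  if Z.eqb z 1 then b 2%nat 1%nat else
  if Z.eqb z (-1) then b 1%nat 2%nat else
  if Z.eqb z 2 then Cmul (RtoC (knorm w)) (b 3%nat 1%nat) else
  if Z.eqb z (-2) then Cmul (RtoC (knorm w)) (b 1%nat 3%nat) else C0.

Lemma tto_symbol_finitely_supported w b : finitely_supported (tto_symbol w b) 2.
Proof.
  intros z Hz; unfold tto_symbol.
  repeat match goal with |- context [Z.eqb ?x ?y] => destruct (Z.eqb_spec x y); [lia|] end.
  reflexivity.
Qed.

Lemma tto_symbol_entry_13 w b v :
  Cnorm2 w < 1 -> tto_entry w (tto_symbol w b) 1 3 v -> v = b 1%nat 3%nat.
Proof.
  intros hw H; destruct (tto_entry_row_delta w _ 0 3 v ltac:(lia) H) as [G [HG ->]].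
  rewrite (prod_coef_unique _ _ _ _ _ (HG 0%nat)
             (prod_coef_finitely_supported _ 2 _ 0 (tto_symbol_finitely_supported w b))).
  pose proof (knorm_neq0 w hw); apply Cx_ext; simpl; field; assumption.
Qed.

Lemma tto_symbol_entry_31 w b v :
  Cnorm2 w < 1 -> tto_entry w (tto_symbol w b) 3 1 v -> v = b 3%nat 1%nat.
Proof.
  intros hw H; apply (Cser_cv_unique _ _ _ (tto_entry_column_delta w _ 0 v ltac:(lia) H)).
  replace (b 3%nat 1%nat)
    with (Cpsum (fun n => Cmul (tto_symbol w b (Z.of_nat n - Z.of_nat 0)%Z) (Cconj (ebasis w 3 n))) 2).
  - apply Cser_cv_finite; intros n Hn.
    rewrite tto_symbol_finitely_supported by lia; Cx_ring.
  - pose proof (knorm_neq0 w hw); apply Cx_ext; simpl; field; assumption.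
Qed.

Lemma tto_conditions_in_TTO w b : Cnorm2 w < 1 -> tto_conditions w b -> in_TTO w b.
Proof.
  intros hw [E22 [E23 [E32 E33]]].
  set (phi := tto_symbol w b).
  assert (determined : forall i j x, (1 <= j <= 3)%nat ->
            (forall v, tto_entry w phi i j v -> v = x) -> tto_entry w phi i j x).
  { intros i j x Hj Hx.
    destruct (tto_entry_exists_finitely_supported w phi 2 i j hw
                (tto_symbol_finitely_supported w b) Hj) as [v Hv].
    now rewrite <- (Hx v Hv). }
  assert (H11 : tto_entry w phi 1 1 (b 1%nat 1%nat)).
  { apply determined; [lia|]; intros v Hv.
    exact (tto_entry_toeplitz_block w phi 0 0 v ltac:(lia) ltac:(lia) Hv). }
  assert (H12 : tto_entry w phi 1 2 (b 1%nat 2%nat)).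
  { apply determined; [lia|]; intros v Hv.
    exact (tto_entry_toeplitz_block w phi 0 1 v ltac:(lia) ltac:(lia) Hv). }
  assert (H21 : tto_entry w phi 2 1 (b 2%nat 1%nat)).
  { apply determined; [lia|]; intros v Hv.
    exact (tto_entry_toeplitz_block w phi 1 0 v ltac:(lia) ltac:(lia) Hv). }
  assert (H22 : tto_entry w phi 2 2 (b 2%nat 2%nat)).
  { apply determined; [lia|]; intros v Hv; rewrite E22.
    exact (tto_entry_toeplitz_block w phi 1 1 v ltac:(lia) ltac:(lia) Hv). }
  assert (H13 : tto_entry w phi 1 3 (b 1%nat 3%nat)).
  { apply determined; [lia|]; intros v Hv; exact (tto_symbol_entry_13 w b v hw Hv). }
  assert (H31 : tto_entry w phi 3 1 (b 3%nat 1%nat)).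
  { apply determined; [lia|]; intros v Hv; exact (tto_symbol_entry_31 w b v hw Hv). }
  assert (H23 : tto_entry w phi 2 3 (b 2%nat 3%nat)).
  { apply determined; [lia|]; intros v Hv; rewrite E23; exact (tto_entry_23 w phi _ _ _ Hv H13 H12). }
  assert (H32 : tto_entry w phi 3 2 (b 3%nat 2%nat)).
  { apply determined; [lia|]; intros v Hv; rewrite E32; exact (tto_entry_32 w phi _ _ _ Hv H21 H31). }
  assert (H33 : tto_entry w phi 3 3 (b 3%nat 3%nat)).
  { apply determined; [lia|]; intros v Hv; rewrite E33.
    exact (tto_entry_33 w phi _ _ _ _ _ _ _ hw Hv H32 H13 H12 H11 H21 H31). }
  exists phi; split; [exact (L2_finitely_supported phi 2 (tto_symbol_finitely_supported w b))|].
  intros [|[|[|[|i]]]] [|[|[|[|j]]]] Hi Hj; try lia; assumption.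
Qed.

Theorem mainTheorem11 (w : Cx) (hw0 : w <> C0) (hw1 : Cnorm2 w < 1)
  (b : nat -> nat -> Cx) :
  in_TTO w b <->
  (b 2%nat 2%nat = b 1%nat 1%nat /\
   b 2%nat 3%nat = Cadd (Cmul (Cconj w) (b 1%nat 3%nat))
                        (Cmul (RtoC (/ knorm w)) (b 1%nat 2%nat)) /\
   b 3%nat 2%nat = Cadd (Cmul (RtoC (/ knorm w)) (b 2%nat 1%nat))
                        (Cmul w (b 3%nat 1%nat)) /\
   b 3%nat 3%nat =
     Cadd (b 1%nat 1%nat)
      (Cadd (Cmul (Cmul (Cpow (Cconj w) 2) (RtoC (knorm w))) (b 1%nat 3%nat))
       (Cadd (Cmul (Cconj w) (b 1%nat 2%nat))
        (Cadd (Cmul w (b 2%nat 1%nat))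
              (Cmul (Cmul (Cpow w 2) (RtoC (knorm w))) (b 3%nat 1%nat)))))).
Proof.
  split; [apply in_TTO_conditions | apply tto_conditions_in_TTO]; assumption.
Qed.
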